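(* Let $\langle W,\varphi,(Y,\mathbb S,\sigma)\rangle$ be a monotone one-dimensional cocycle, $W\subseteq\mathbb R$ an open interval, with skew-product system $(X,\mathbb S_+,\pi)$, $h=\mathrm{pr}_2$, and $\tau\in\mathbb S_+$, $\tau>0$. Assume: (1) $u_1<u_2$ implies $\varphi(k\tau,u_1,y)<\varphi(k\tau,u_2,y)$ for all $k\in\mathbb N$, $y\in Y$; (2) $x_0\in X$ is positively Lagrange stable; (3) $y_0:=h(x_0)$ is asymptotically $\tau$-periodic, with $q:=\lim_{k\to\infty}\sigma(k\tau,y_0)$; (4) every $\tau$-periodic point $(u,q)$ of $(X,\mathbb S_+,\pi)$ is positively asymptotically stable. Then $x_0$ is asymptotically $\tau$-periodic.
   Context: Setting: $\mathbb S=\mathbb R$ or $\mathbb Z$; $(Y,\mathbb S,\sigma)$ two-sided dynamical system on a complete metric space; monotone cocycle $\varphi:\mathbb S_+\times W\times Y\to W$ (continuous, $\varphi(0,u,y)=u$, $\varphi(t+s,u,y)=\varphi(t,\varphi(s,u,y),\sigma(s,y))$, order preserving in $u$); skew-product $\pi(t,(u,y))=(\varphi(t,u,y),\sigma(t,y))$ on $X=W\times Y$. Positively Lagrange stable: $\{\pi(t,x_0):t\ge0\}$ precompact. $y_0$ asymptotically $\tau$-periodic: exists $q$ with $\sigma(\tau,q)=q$ and $\rho(\sigma(t,y_0),\sigma(t,q))\to0$. A $\tau$-periodic point $(u_0,q)$ (i.e. $\varphi(\tau,u_0,q)=u_0$) is positively asymptotically stable if (a) for every $\varepsilon>0$ there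 is $\delta>0$ with $|u-u_0|<\delta\Rightarrow|\varphi(t,u,q)-\varphi(t,u_0,q)|<\varepsilon$ for all $t\ge0$, and (b) there is $\gamma>0$ with $|\varphi(t,u,q)-\varphi(t,u_0,q)|\to0$ as $t\to\infty$ for all $|u-u_0|<\gamma$. $x_0$ is asymptotically $\tau$-periodic if there is $p$ with $\pi(\tau,p)=p$ and $\rho(\pi(t,x_0),\pi(t,p))\to0$. *)

From Stdlib Require Import Reals.
Open Scope R_scope.

(* disc = false : S = R ;  disc = true : S = Z (integers viewed inside R). *)
Definition inS (disc : bool) (t : R) : Prop :=
  if disc then exists z : Z, t = IZR z else True.

Definition inSp (disc : bool) (t : R) : Prop := inS disc t /\ 0 <= t.

(* a = None means -oo, b = None means +oo. *)
Definition inW (a b : option R) (u : R) : Prop :=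
  match a with Some a' => a' < u | None => True end /\
  match b with Some b' => u < b' | None => True end.

Definition is_metric {Y : Type} (d : Y -> Y -> R) : Prop :=
  (forall x y, 0 <= d x y) /\
  (forall x y, d x y = 0 <-> x = y) /\
  (forall x y, d x y = d y x) /\
  (forall x y z, d x z <= d x y + d y z).

Definition is_complete {Y : Type} (d : Y -> Y -> R) : Prop :=
  forall s : nat -> Y,
    (forall eps, 0 < eps -> exists N, forall m n, (N <= m)%nat -> (N <= n)%nat ->
        d (s m) (s n) < eps) ->
    exists l, forall eps, 0 < eps -> exists N, forall n, (N <= n)%nat -> d (s n) l < eps.

Definition is_dyn_system {Y : Type} (disc : bool) (d : Y -> Y -> R)
    (sigma : R -> Y -> Y) : Prop :=
  (forall y, sigma 0 y = y) /\
  (forall t s y, inS disc t -> inS disc s -> sigma (t + s) y = sigma t (sigma s y)) /\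
  (forall t y, inS disc t -> forall eps, 0 < eps -> exists delta, 0 < delta /\
     forall t' y', inS disc t' -> Rabs (t' - t) < delta -> d y' y < delta ->
       d (sigma t' y') (sigma t y) < eps).

Definition is_monotone_cocycle {Y : Type} (disc : bool) (d : Y -> Y -> R)
    (a b : option R) (sigma : R -> Y -> Y) (phi : R -> R -> Y -> R) : Prop :=
  (forall t u y, inSp disc t -> inW a b u -> inW a b (phi t u y)) /\
  (forall u y, inW a b u -> phi 0 u y = u) /\
  (forall t s u y, inSp disc t -> inSp disc s -> inW a b u ->
     phi (t + s) u y = phi t (phi s u y) (sigma s y)) /\
  (forall t u y, inSp disc t -> inW a b u -> forall eps, 0 < eps ->
     exists delta, 0 < delta /\
     forall t' u' y', inSp disc t' -> inW a b u' ->
       Rabs (t' - t) < delta -> Rabs (u' - u) < delta -> d y' y < delta ->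
       Rabs (phi t' u' y' - phi t u y) < eps) /\
  (forall t u1 u2 y, inSp disc t -> inW a b u1 -> inW a b u2 -> u1 <= u2 ->
     phi t u1 y <= phi t u2 y).

Definition skew {Y : Type} (sigma : R -> Y -> Y) (phi : R -> R -> Y -> R)
    (t : R) (x : R * Y) : R * Y :=
  (phi t (fst x) (snd x), sigma t (snd x)).

Definition rhoX {Y : Type} (d : Y -> Y -> R) (x x' : R * Y) : R :=
  Rabs (fst x - fst x') + d (snd x) (snd x').

Definition tends_to_0_Sp (disc : bool) (f : R -> R) : Prop :=
  forall eps, 0 < eps -> exists T, forall t, inSp disc t -> T <= t -> Rabs (f t) < eps.

Definition precompactX {Y : Type} (d : Y -> Y -> R) (a b : option R)
    (A : R * Y -> Prop) : Prop :=
  forall s : nat -> R * Y, (forall n, A (s n)) ->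
    exists (g : nat -> nat) (l : R * Y),
      (forall n, (g n < g (S n))%nat) /\ inW a b (fst l) /\
      forall eps, 0 < eps -> exists N, forall n, (N <= n)%nat ->
        rhoX d (s (g n)) l < eps.

Definition pos_Lagrange_stable {Y : Type} (disc : bool) (d : Y -> Y -> R)
    (a b : option R) (sigma : R -> Y -> Y) (phi : R -> R -> Y -> R)
    (x0 : R * Y) : Prop :=
  precompactX d a b (fun x => exists t, inSp disc t /\ x = skew sigma phi t x0).

Definition asympt_periodic_Y_with {Y : Type} (disc : bool) (d : Y -> Y -> R)
    (sigma : R -> Y -> Y) (tau : R) (y0 q : Y) : Prop :=
  sigma tau q = q /\
  tends_to_0_Sp disc (fun t => d (sigma t y0) (sigma t q)).

Definition periodic_point {Y : Type} (sigma : R -> Y -> Y) (phi : R -> R -> Y -> R)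
    (tau : R) (x : R * Y) : Prop :=
  skew sigma phi tau x = x.

Definition pos_asympt_stable {Y : Type} (disc : bool) (a b : option R)
    (phi : R -> R -> Y -> R) (u0 : R) (q : Y) : Prop :=
  (forall eps, 0 < eps -> exists delta, 0 < delta /\
     forall u, inW a b u -> Rabs (u - u0) < delta ->
       forall t, inSp disc t -> Rabs (phi t u q - phi t u0 q) < eps) /\
  (exists gamma, 0 < gamma /\
     forall u, inW a b u -> Rabs (u - u0) < gamma ->
       tends_to_0_Sp disc (fun t => phi t u q - phi t u0 q)).

Definition asympt_periodic_X {Y : Type} (disc : bool) (d : Y -> Y -> R)
    (a b : option R) (sigma : R -> Y -> Y) (phi : R -> R -> Y -> R)
    (tau : R) (x0 : R * Y) : Prop :=
  exists p : R * Y, inW a b (fst p) /\ periodic_point sigma phi tau p /\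
    tends_to_0_Sp disc (fun t => rhoX d (skew sigma phi t x0) (skew sigma phi t p)).

From Stdlib Require Import ZArith Reals Lra Lia Classical IndefiniteDescription.
Open Scope R_scope.

(* Sample the orbit at multiples of [tau]: [u_k := phi (k tau) u0 y0] satisfies
   [u_(k+1) = phi tau u_k (sigma (k tau) y0)], an asymptotically autonomous
   iteration of the Poincare map [P u := phi tau u q].  Lagrange stability makes
   the cluster set of [(u_k)] compact and nonempty; it is mapped into and onto
   itself by the monotone map [P], so its maximum and minimum are fixed points
   of [P].  Asymptotic stability of every fixed point makes the graph of [P]
   cross the diagonal downwards there, so [P] has at most one fixed point [M];
   hence [u_k -> M], and continuity of [phi], uniform over one period by
   compactness, carries this to all times. *)

Definition approx_closed (A : R -> Prop) : Prop :=
  forall x, (forall e, 0 < e -> exists y, A y /\ Rabs (y - x) < e) -> A x.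

Definition cluster_point (u : nat -> R) (v : R) : Prop :=
  forall e, 0 < e -> forall N, exists k, (N <= k)%nat /\ Rabs (u k - v) < e.

Definition subseq_cvg_in (A : R -> Prop) (u : nat -> R) : Prop :=
  forall s : nat -> nat, exists (g : nat -> nat) (l : R),
    (forall n, (n <= g n)%nat) /\ A l /\ Un_cv (fun n => u (s (g n))) l.

Lemma increasing_nat_ge_id (g : nat -> nat) :
  (forall n, (g n < g (S n))%nat) -> forall n, (n <= g n)%nat.
Proof. intros Hg n; induction n as [|n IH]; [lia|]. specialize (Hg n). lia. Qed.

Lemma Un_cv_subseq (u : nat -> R) (l : R) (g : nat -> nat) :
  (forall n, (n <= g n)%nat) -> Un_cv u l -> Un_cv (fun n => u (g n)) l.
Proof.
  intros Hg Hu e He. destruct (Hu e He) as [N HN].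
  exists N. intros n Hn. apply HN. specialize (Hg n). lia.
Qed.

Lemma cluster_point_of_subseq (u : nat -> R) (s : nat -> nat) (l : R) :
  (forall n, (n <= s n)%nat) -> Un_cv (fun n => u (s n)) l -> cluster_point u l.
Proof.
  intros Hs Hl e He N. destruct (Hl e He) as [N1 HN1].
  exists (s (max N N1)). split; [specialize (Hs (max N N1)); lia|].
  apply HN1. lia.
Qed.

Lemma cluster_point_subseq (u : nat -> R) (v : R) :
  cluster_point u v -> exists s : nat -> nat,
    (forall n, (n <= s n)%nat) /\ Un_cv (fun n => u (s n)) v.
Proof.
  intros Hv.
  assert (Hall : forall n, exists k, (n <= k)%nat /\ Rabs (u k - v) < / INR (S n)).
  { intros n. apply Hv, Rinv_0_lt_compat, lt_0_INR. lia. }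
  destruct (functional_choice _ Hall) as [s Hs].
  exists s. split; [intros n; apply Hs|].
  intros e He. destruct (archimed_cor1 e He) as [N [HN HN0]].
  exists N. intros n Hn. unfold Rdist.
  apply Rlt_trans with (/ INR (S n)); [apply Hs|].
  apply Rle_lt_trans with (/ INR N); [|exact HN].
  apply Rinv_le_contravar; [apply lt_0_INR; lia|apply le_INR; lia].
Qed.

Lemma cluster_point_shift (u : nat -> R) (v : R) :
  cluster_point u v -> cluster_point (fun k => u (S k)) v.
Proof.
  intros Hv e He N. destruct (Hv e He (S N)) as [[|k] [Hk Hkv]]; [lia|].
  exists k. split; [lia|exact Hkv].
Qed.

Lemma cluster_point_ValAdh (u : nat -> R) (v : R) :
  Rtopology.ValAdh u v -> cluster_point u v.
Proof.
  intros Hv e He N.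
  destruct (Hv (Rtopology.disc v (mkposreal e He)) N) as [k [Hk Hkv]].
  { exists (mkposreal e He). intros y Hy. exact Hy. }
  exists k. split; [exact Hk|exact Hkv].
Qed.

Lemma cluster_point_in (A : R -> Prop) (u : nat -> R) (v : R) :
  approx_closed A -> (forall n, A (u n)) -> cluster_point u v -> A v.
Proof.
  intros HA Hu Hv. apply HA. intros e He.
  destruct (Hv e He 0%nat) as [k [_ Hk]]. exists (u k). auto.
Qed.

Lemma cluster_point_Rabs_le (u : nat -> R) (B v : R) :
  (forall k, Rabs (u k) <= B) -> cluster_point u v -> Rabs v <= B.
Proof.
  intros HB Hv. apply Rnot_lt_le. intro Hlt.
  destruct (Hv (Rabs v - B) ltac:(lra) 0%nat) as [k [_ Hk]].
  generalize (Rabs_triang_inv v (u k)) (HB k). rewrite Rabs_minus_sym in Hk. lra.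
Qed.

Lemma approx_closed_cluster_point (u : nat -> R) : approx_closed (cluster_point u).
Proof.
  intros x Hx e He N. destruct (Hx (e / 2) ltac:(lra)) as [v [Hv Hvx]].
  destruct (Hv (e / 2) ltac:(lra) N) as [k [Hk Hkv]].
  exists k. split; [exact Hk|].
  replace (u k - x) with ((u k - v) + (v - x)) by ring.
  eapply Rle_lt_trans; [apply Rabs_triang|lra].
Qed.

Lemma approx_closed_and (A B : R -> Prop) :
  approx_closed A -> approx_closed B -> approx_closed (fun x => A x /\ B x).
Proof.
  intros HA HB x Hx. split; [apply HA|apply HB]; intros e He;
    destruct (Hx e He) as [y [[HAy HBy] Hyx]]; eauto.
Qed.

Lemma approx_closed_le (c : R) : approx_closed (fun x => x <= c).
Proof.
  intros x Hx. apply Rnot_lt_le. intro Hlt.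
  destruct (Hx (x - c) ltac:(lra)) as [y [Hy Hyx]]. apply Rabs_def2 in Hyx. lra.
Qed.

Lemma approx_closed_ge (c : R) : approx_closed (fun x => c <= x).
Proof.
  intros x Hx. apply Rnot_lt_le. intro Hlt.
  destruct (Hx (c - x) ltac:(lra)) as [y [Hy Hyx]]. apply Rabs_def2 in Hyx. lra.
Qed.

(* Two integers within [1/2] of [x] coincide. *)
Lemma approx_closed_IZR : approx_closed (fun x => exists z, x = IZR z).
Proof.
  intros x Hx.
  destruct (Hx (/ 2) ltac:(lra)) as [y1 [[z1 ->] H1]].
  exists z1. apply NNPP. intro Hne.
  assert (Hd : 0 < Rabs (IZR z1 - x)) by (apply Rabs_pos_lt; lra).
  destruct (Hx (Rmin (Rabs (IZR z1 - x)) (/ 2))) as [y2 [[z2 ->] H2]].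
  { apply Rmin_glb_lt; lra. }
  assert (Hm1 := Rmin_l (Rabs (IZR z1 - x)) (/ 2)).
  assert (Hm2 := Rmin_r (Rabs (IZR z1 - x)) (/ 2)).
  assert (z2 = z1).
  { apply Rabs_def2 in H1. apply Rabs_def2 in H2.
    assert (Hup : IZR (z2 - z1) < IZR 1) by (rewrite minus_IZR; lra).
    assert (Hlow : IZR (-1) < IZR (z2 - z1)) by (rewrite minus_IZR; lra).
    apply lt_IZR in Hup. apply lt_IZR in Hlow. lia. }
  subst z2. lra.
Qed.

Lemma approx_closed_max (A : R -> Prop) (B : R) :
  approx_closed A -> (forall v, A v -> v <= B) -> (exists v, A v) ->
  exists M, A M /\ forall v, A v -> v <= M.
Proof.
  intros Hcl HB Hne.
  destruct (completeness A (ex_intro _ B HB) Hne) as [M [Hub Hlub]].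
  exists M. split; [|exact Hub].
  apply Hcl. intros e He. apply NNPP. intro Hn.
  assert (M <= M - e); [|lra].
  apply Hlub. intros v Hv. apply Rnot_lt_le. intro Hlt.
  apply Hn. exists v. split; [exact Hv|].
  assert (v <= M) by (apply Hub; exact Hv).
  rewrite Rabs_left1; lra.
Qed.

Lemma approx_closed_min (A : R -> Prop) (B : R) :
  approx_closed A -> (forall v, A v -> B <= v) -> (exists v, A v) ->
  exists m, A m /\ forall v, A v -> m <= v.
Proof.
  intros Hcl HB [v0 Hv0].
  destruct (approx_closed_max (fun x => A (- x)) (- B)) as [M [HM HMmax]].
  - intros x Hx. apply Hcl. intros e He. destruct (Hx e He) as [y [Hy Hyx]].
    exists (- y). split; [exact Hy|]. rewrite <- Rabs_Ropp.
    replace (- (- y - - x)) with (y - x) by ring. exact Hyx.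
  - intros v Hv. specialize (HB _ Hv). lra.
  - exists (- v0). rewrite Ropp_involutive. exact Hv0.
  - exists (- M). split; [exact HM|].
    intros v Hv. assert (- v <= M) by (apply HMmax; rewrite Ropp_involutive; exact Hv). lra.
Qed.

Lemma bounded_of_subseq_cvg (A : R -> Prop) (u : nat -> R) :
  subseq_cvg_in A u -> exists B, forall k, Rabs (u k) <= B.
Proof.
  intros Hu. apply NNPP. intro Hn.
  assert (Hall : forall n, exists k, INR n < Rabs (u k)).
  { intros n. apply NNPP. intro Hn2. apply Hn. exists (INR n). intros k.
    apply Rnot_lt_le. intro. apply Hn2. eauto. }
  destruct (functional_choice _ Hall) as [s Hs].
  destruct (Hu s) as [g [l [Hg [_ Hl]]]].
  destruct (Hl 1 Rlt_0_1) as [N HN].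
  destruct (INR_unbounded (Rabs l + 1)) as [N2 HN2].
  set (n := max N N2).
  assert (INR N2 <= INR (g n)) by (apply le_INR; specialize (Hg n); lia).
  specialize (HN n ltac:(lia)). specialize (Hs (g n)). unfold Rdist in HN.
  generalize (Rabs_triang_inv (u (s (g n))) l). lra.
Qed.

Lemma cvg_of_unique_cluster_point (A : R -> Prop) (u : nat -> R) (M : R) :
  subseq_cvg_in A u -> (forall v, cluster_point u v -> v = M) -> Un_cv u M.
Proof.
  intros Hu HM e He. apply NNPP. intro Hn.
  assert (Hall : forall n, exists k, (n <= k)%nat /\ e <= Rabs (u k - M)).
  { intros n. apply NNPP. intro Hn2. apply Hn. exists n. intros k Hk. unfold Rdist.
    apply Rnot_le_lt. intro. apply Hn2. eauto. }
  destruct (functional_choice _ Hall) as [s Hs].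
  destruct (Hu s) as [g [l [Hg [_ Hl]]]].
  assert (Hsg : forall n, (n <= s (g n))%nat)
    by (intros n; specialize (Hg n); specialize (Hs (g n)); lia).
  assert (l = M) by exact (HM l (cluster_point_of_subseq u _ l Hsg Hl)). subst l.
  destruct (Hl e He) as [N HN]. specialize (HN N (le_n N)).
  destruct (Hs (g N)) as [_ Hfar]. unfold Rdist in HN. lra.
Qed.

Section MonotoneAsymptoticIteration.

Variables (D : R -> Prop) (P : R -> R) (u : nat -> R).
Hypothesis P_mono : forall x y, D x -> D y -> x <= y -> P x <= P y.
Hypothesis P_fixed_unique : forall v w, D v -> D w -> P v = v -> P w = w -> v = w.
Hypothesis u_subseq_cvg : subseq_cvg_in D u.
Hypothesis u_step : forall (s : nat -> nat) (l : R), (forall n, (n <= s n)%nat) -> D l ->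
  Un_cv (fun n => u (s n)) l -> Un_cv (fun n => u (S (s n))) (P l).

Lemma cluster_point_in_dom (v : R) : cluster_point u v -> D v.
Proof.
  intros Hv. destruct (cluster_point_subseq u v Hv) as [s [Hs Hsv]].
  destruct (u_subseq_cvg s) as [g [l [Hg [Hl Hsl]]]].
  replace v with l; [exact Hl|].
  exact (UL_sequence _ l v Hsl (Un_cv_subseq _ v g Hg Hsv)).
Qed.

Lemma cluster_point_image (v : R) : cluster_point u v -> cluster_point u (P v).
Proof.
  intros Hv. destruct (cluster_point_subseq u v Hv) as [s [Hs Hsv]].
  apply (cluster_point_of_subseq u (fun n => S (s n))); [intros n; specialize (Hs n); lia|].
  exact (u_step s v Hs (cluster_point_in_dom v Hv) Hsv).
Qed.

Lemma cluster_point_preimage (v : R) :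
  cluster_point u v -> exists w, cluster_point u w /\ D w /\ P w = v.
Proof.
  intros Hv.
  destruct (cluster_point_subseq _ v (cluster_point_shift u v Hv)) as [s [Hs Hsv]].
  destruct (u_subseq_cvg s) as [g [l [Hg [Hl Hsl]]]].
  assert (Hsg : forall n, (n <= s (g n))%nat)
    by (intros n; specialize (Hg n); specialize (Hs (g n)); lia).
  exists l. split; [exact (cluster_point_of_subseq u _ l Hsg Hsl)|split; [exact Hl|]].
  exact (UL_sequence _ _ v (u_step _ l Hsg Hl Hsl) (Un_cv_subseq _ v g Hg Hsv)).
Qed.

Lemma cluster_point_exists : exists v, cluster_point u v.
Proof.
  destruct (u_subseq_cvg (fun n => n)) as [g [l [Hg [_ Hl]]]].
  exists l. exact (cluster_point_of_subseq u g l Hg Hl).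
Qed.

(* The largest cluster point [M] satisfies [P M <= M] because the cluster set is
   invariant, and [M <= P M] because [M = P w] for a cluster point [w <= M]. *)
Lemma cluster_point_max_fixed :
  exists M, cluster_point u M /\ D M /\ P M = M /\ forall v, cluster_point u v -> v <= M.
Proof.
  destruct (bounded_of_subseq_cvg D u u_subseq_cvg) as [B HB].
  destruct (approx_closed_max (cluster_point u) B (approx_closed_cluster_point u))
    as [M [HM HMmax]].
  - intros v Hv. apply Rle_trans with (Rabs v); [apply Rle_abs|].
    exact (cluster_point_Rabs_le u B v HB Hv).
  - exact cluster_point_exists.
  - assert (HMD := cluster_point_in_dom M HM).
    destruct (cluster_point_preimage M HM) as [w [Hw [HwD HwM]]].
    assert (P M <= M) by exact (HMmax _ (cluster_point_image M HM)).
    assert (P w <= P M) by (apply P_mono; auto).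
    exists M. repeat split; auto. lra.
Qed.

Lemma cluster_point_min_fixed :
  exists m, cluster_point u m /\ D m /\ P m = m /\ forall v, cluster_point u v -> m <= v.
Proof.
  destruct (bounded_of_subseq_cvg D u u_subseq_cvg) as [B HB].
  destruct (approx_closed_min (cluster_point u) (- B) (approx_closed_cluster_point u))
    as [m [Hm Hmmin]].
  - intros v Hv. assert (Hb := cluster_point_Rabs_le u B v HB Hv).
    generalize (Rle_abs (- v)). rewrite Rabs_Ropp. lra.
  - exact cluster_point_exists.
  - assert (HmD := cluster_point_in_dom m Hm).
    destruct (cluster_point_preimage m Hm) as [w [Hw [HwD Hwm]]].
    assert (m <= P m) by exact (Hmmin _ (cluster_point_image m Hm)).
    assert (P m <= P w) by (apply P_mono; auto).
    exists m. repeat split; auto. lra.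
Qed.

Theorem monotone_asymptotic_iteration_cvg : exists M, D M /\ P M = M /\ Un_cv u M.
Proof.
  destruct cluster_point_max_fixed as [M [_ [HMD [HPM HMmax]]]].
  destruct cluster_point_min_fixed as [m [_ [HmD [HPm Hmmin]]]].
  assert (m = M) by (apply P_fixed_unique; auto). subst m.
  exists M. split; [exact HMD|split; [exact HPM|]].
  apply (cvg_of_unique_cluster_point D u M u_subseq_cvg).
  intros v Hv. apply Rle_antisym; auto.
Qed.

End MonotoneAsymptoticIteration.

Section ScalarFixedPoints.

Variables (D : R -> Prop) (P : R -> R).
Hypothesis D_interval : forall x y z, D x -> D z -> x <= y <= z -> D y.
Hypothesis P_dom : forall x, D x -> D (P x).
Hypothesis P_mono : forall x y, D x -> D y -> x <= y -> P x <= P y.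
Hypothesis P_cont : forall c, D c -> forall e, 0 < e -> exists dl, 0 < dl /\
  forall w, D w -> Rabs (w - c) < dl -> Rabs (P w - P c) < e.

Lemma below_diagonal_near (c : R) : D c -> P c < c ->
  exists dl, 0 < dl /\ forall w, D w -> Rabs (w - c) < dl -> P w < w.
Proof.
  intros Hc Hlt. destruct (P_cont c Hc ((c - P c) / 2)) as [dl [Hdl Hd]]; [lra|].
  exists (Rmin dl ((c - P c) / 2)). split; [apply Rmin_glb_lt; lra|].
  intros w Hw Hwc.
  assert (Hm1 := Rmin_l dl ((c - P c) / 2)). assert (Hm2 := Rmin_r dl ((c - P c) / 2)).
  specialize (Hd w Hw ltac:(lra)). apply Rabs_def2 in Hd. apply Rabs_def2 in Hwc. lra.
Qed.

Lemma above_diagonal_near (c : R) : D c -> c < P c ->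
  exists dl, 0 < dl /\ forall w, D w -> Rabs (w - c) < dl -> w < P w.
Proof.
  intros Hc Hlt. destruct (P_cont c Hc ((P c - c) / 2)) as [dl [Hdl Hd]]; [lra|].
  exists (Rmin dl ((P c - c) / 2)). split; [apply Rmin_glb_lt; lra|].
  intros w Hw Hwc.
  assert (Hm1 := Rmin_l dl ((P c - c) / 2)). assert (Hm2 := Rmin_r dl ((P c - c) / 2)).
  specialize (Hd w Hw ltac:(lra)). apply Rabs_def2 in Hd. apply Rabs_def2 in Hwc. lra.
Qed.

Lemma attracted_right_below (v w : R) :
  D w -> v < w -> Un_cv (fun k => Nat.iter k P w) v -> P w < w.
Proof.
  intros Hw Hvw Hcv. apply Rnot_le_lt. intro Hle.
  assert (Hup : forall k, w <= Nat.iter k P w).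
  { induction k as [|k IH]; simpl; [lra|].
    apply Rle_trans with (P w); [exact Hle|].
    apply P_mono; [exact Hw|apply Nat.iter_invariant; auto|exact IH]. }
  destruct (Hcv (w - v) ltac:(lra)) as [N HN]. specialize (HN N (le_n N)).
  specialize (Hup N). unfold Rdist in HN. apply Rabs_def2 in HN. lra.
Qed.

Lemma attracted_left_above (v w : R) :
  D w -> w < v -> Un_cv (fun k => Nat.iter k P w) v -> w < P w.
Proof.
  intros Hw Hwv Hcv. apply Rnot_le_lt. intro Hle.
  assert (Hdown : forall k, Nat.iter k P w <= w).
  { induction k as [|k IH]; simpl; [lra|].
    apply Rle_trans with (P w); [|exact Hle].
    apply P_mono; [apply Nat.iter_invariant; auto|exact Hw|exact IH]. }
  destruct (Hcv (v - w) ltac:(lra)) as [N HN]. specialize (HN N (le_n N)).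
  specialize (Hdown N). unfold Rdist in HN. apply Rabs_def2 in HN. lra.
Qed.

Section FirstFixedPoint.

Hypothesis right_below : forall v, D v -> P v = v -> exists g, 0 < g /\
  forall w, D w -> v < w < v + g -> P w < w.

(* [c] is the supremum of the [c'] such that the graph of [P] stays below the
   diagonal on [(v1, c']]. *)
Lemma first_fixed_point_right (v1 v2 : R) :
  D v1 -> D v2 -> P v1 = v1 -> P v2 = v2 -> v1 < v2 ->
  exists c, v1 < c <= v2 /\ D c /\ P c = c /\ forall w, v1 < w < c -> P w < w.
Proof.
  intros D1 D2 F1 F2 Hlt.
  set (E := fun c => v1 <= c <= v2 /\ forall w, v1 < w <= c -> P w < w).
  destruct (completeness E) as [c [Hub Hlub]].
  { exists v2. intros x [Hx _]. lra. }
  { exists v1. split; [lra|intros; lra]. }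
  assert (Hc2 : c <= v2) by (apply Hlub; intros x [Hx _]; lra).
  assert (Hbelow : forall w, v1 < w < c -> P w < w).
  { intros w Hw. apply NNPP. intro Hn. assert (c <= w); [|lra].
    apply Hlub. intros x [Hx HxP]. apply Rnot_lt_le. intro Hwx.
    apply Hn, HxP. lra. }
  assert (Hc1 : v1 < c).
  { destruct (right_below v1 D1 F1) as [g [Hg Hw]].
    set (m := Rmin g (v2 - v1)).
    assert (Hm1 : m <= g) by apply Rmin_l. assert (Hm2 : m <= v2 - v1) by apply Rmin_r.
    assert (Hm0 : 0 < m) by (apply Rmin_glb_lt; lra).
    assert (v1 + m / 2 <= c); [|lra].
    apply Hub. split; [lra|]. intros w Hw'.
    apply Hw; [apply (D_interval v1 w v2); auto; lra|lra]. }
  assert (Dc : D c) by (apply (D_interval v1 c v2); auto; lra).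
  exists c. split; [lra|split; [exact Dc|split; [|exact Hbelow]]].
  destruct (Rtotal_order (P c) c) as [HPc|[HPc|HPc]]; [exfalso| exact HPc| exfalso].
  - assert (Hcv2 : c < v2) by (destruct (Req_dec c v2); [subst; lra|lra]).
    destruct (below_diagonal_near c Dc HPc) as [dl [Hdl Hd]].
    set (m := Rmin dl (v2 - c)).
    assert (Hm1 : m <= dl) by apply Rmin_l. assert (Hm2 : m <= v2 - c) by apply Rmin_r.
    assert (Hm0 : 0 < m) by (apply Rmin_glb_lt; lra).
    assert (c + m / 2 <= c); [|lra].
    apply Hub. split; [lra|]. intros w Hw.
    destruct (Rlt_le_dec w c); [apply Hbelow; lra|].
    apply Hd; [apply (D_interval v1 w v2); auto; lra|rewrite Rabs_right; lra].
  - destruct (above_diagonal_near c Dc HPc) as [dl [Hdl Hd]].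
    set (m := Rmin dl (c - v1)).
    assert (Hm1 : m <= dl) by apply Rmin_l. assert (Hm2 : m <= c - v1) by apply Rmin_r.
    assert (Hm0 : 0 < m) by (apply Rmin_glb_lt; lra).
    assert (Dw : D (c - m / 2)) by (apply (D_interval v1 _ v2); auto; lra).
    assert (c - m / 2 < P (c - m / 2)) by (apply Hd; [exact Dw|rewrite Rabs_left; lra]).
    assert (P (c - m / 2) < c - m / 2) by (apply Hbelow; lra).
    lra.
Qed.

End FirstFixedPoint.

Lemma fixed_point_unique_of_crossing
  (right_below : forall v, D v -> P v = v -> exists g, 0 < g /\
     forall w, D w -> v < w < v + g -> P w < w)
  (left_above : forall v, D v -> P v = v -> exists g, 0 < g /\
     forall w, D w -> v - g < w < v -> w < P w) :
  forall v1 v2, D v1 -> D v2 -> P v1 = v1 -> P v2 = v2 -> v1 = v2.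
Proof.
  assert (Hlt : forall v1 v2, D v1 -> D v2 -> P v1 = v1 -> P v2 = v2 -> ~ v1 < v2).
  { intros v1 v2 D1 D2 F1 F2 H12.
    destruct (first_fixed_point_right right_below v1 v2 D1 D2 F1 F2 H12)
      as [c [Hc [Dc [Fc Hbelow]]]].
    destruct (left_above c Dc Fc) as [g [Hg Habove]].
    set (w := Rmax v1 (c - g)).
    assert (Hw1 : v1 <= w) by apply Rmax_l. assert (Hw2 : c - g <= w) by apply Rmax_r.
    assert (Hwc : w < c) by (apply Rmax_lub_lt; lra).
    assert (Dw : D ((w + c) / 2)) by (apply (D_interval v1 _ v2); auto; lra).
    assert ((w + c) / 2 < P ((w + c) / 2)) by (apply Habove; [exact Dw|lra]).
    assert (P ((w + c) / 2) < (w + c) / 2) by (apply Hbelow; lra).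
    lra. }
  intros v1 v2 D1 D2 F1 F2.
  destruct (Rtotal_order v1 v2) as [H12|[H12|H12]]; [exfalso|exact H12|exfalso].
  - exact (Hlt v1 v2 D1 D2 F1 F2 H12).
  - exact (Hlt v2 v1 D2 D1 F2 F1 H12).
Qed.

End ScalarFixedPoints.

Lemma inSp_INR_mult (disc : bool) (tau : R) (k : nat) :
  inSp disc tau -> inSp disc (INR k * tau).
Proof.
  intros [Hs Hp]. split.
  - destruct disc; simpl in *; [|exact I]. destruct Hs as [z ->].
    exists (Z.of_nat k * z)%Z. now rewrite mult_IZR, <- INR_IZR_INZ.
  - apply Rmult_le_pos; [apply pos_INR|exact Hp].
Qed.

Lemma inSp_euclid (disc : bool) (tau t : R) : inSp disc tau -> 0 < tau -> inSp disc t ->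
  exists (k : nat) (s : R), inSp disc s /\ s < tau /\ t = s + INR k * tau.
Proof.
  intros [Htau _] Hpos [Ht Ht0].
  destruct (euclidian_division t tau) as [k [r [Hdiv Hr]]]; [lra|].
  rewrite Rabs_right in Hr by lra.
  assert (Hk : (0 <= k)%Z).
  { destruct (Z.lt_ge_cases k 0) as [Hneg|]; [|lia].
    assert (IZR k <= -1) by (apply IZR_le; lia). nra. }
  exists (Z.to_nat k), r. rewrite INR_IZR_INZ, Z2Nat.id by exact Hk.
  repeat split; try lra.
  destruct disc; simpl in *; [|exact I].
  destruct Ht as [zt Hzt]; destruct Htau as [ztau Hztau].
  exists (zt - k * ztau)%Z. rewrite minus_IZR, mult_IZR. subst. lra.
Qed.

Lemma approx_closed_inSp (disc : bool) : approx_closed (inSp disc).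
Proof.
  apply approx_closed_and; [|apply approx_closed_ge].
  destruct disc; simpl; [exact approx_closed_IZR|intros x _; exact I].
Qed.

Lemma tends_to_0_Sp_mult (disc : bool) (tau : R) (f : R -> R) :
  inSp disc tau -> 0 < tau -> tends_to_0_Sp disc f -> Un_cv (fun k => f (INR k * tau)) 0.
Proof.
  intros Htau Hpos Hf e He. destruct (Hf e He) as [T HT].
  destruct (INR_unbounded (T / tau)) as [N HN].
  exists N. intros k Hk. unfold Rdist. rewrite Rminus_0_r.
  apply HT; [exact (inSp_INR_mult disc tau k Htau)|].
  assert (INR N <= INR k) by (apply le_INR; lia).
  apply Rlt_le. apply (Rmult_lt_reg_r (/ tau)); [apply Rinv_0_lt_compat; lra|].
  rewrite Rmult_assoc, Rinv_r, Rmult_1_r by lra. unfold Rdiv in HN. lra.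
Qed.

Lemma tends_to_0_Sp_plus (disc : bool) (f g : R -> R) :
  tends_to_0_Sp disc f -> tends_to_0_Sp disc g -> tends_to_0_Sp disc (fun t => f t + g t).
Proof.
  intros Hf Hg e He.
  destruct (Hf (e / 2) ltac:(lra)) as [T1 HT1]. destruct (Hg (e / 2) ltac:(lra)) as [T2 HT2].
  exists (Rmax T1 T2). intros t Ht HT.
  specialize (HT1 t Ht (Rle_trans _ _ _ (Rmax_l T1 T2) HT)).
  specialize (HT2 t Ht (Rle_trans _ _ _ (Rmax_r T1 T2) HT)).
  eapply Rle_lt_trans; [apply Rabs_triang|lra].
Qed.

(* Compactness of the times [s] in [S_+] with [s <= tau], via Bolzano-Weierstrass. *)
Lemma uniform_radius_on_period (disc : bool) (tau : R) (Q : R -> R -> Prop) :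
  (forall dl dl' s, 0 < dl' <= dl -> Q dl s -> Q dl' s) ->
  (forall s, inSp disc s -> s <= tau -> exists dl, 0 < dl /\
     forall s', inSp disc s' -> s' <= tau -> Rabs (s' - s) < dl -> Q dl s') ->
  exists dl, 0 < dl /\ forall s, inSp disc s -> s <= tau -> Q dl s.
Proof.
  intros Hmono Hloc. apply NNPP. intro Hn.
  assert (Hall : forall n, exists s, (inSp disc s /\ s <= tau) /\ ~ Q (/ INR (S n)) s).
  { intros n. apply NNPP. intro Hn2. apply Hn. exists (/ INR (S n)).
    split; [apply Rinv_0_lt_compat, lt_0_INR; lia|].
    intros s Hs Hst. apply NNPP. intro HQ. apply Hn2. eauto. }
  destruct (functional_choice _ Hall) as [sq Hsq].
  destruct (Rtopology.Bolzano_Weierstrass sq (fun c => 0 <= c <= tau) (Rtopology.compact_P3 0 tau))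
    as [s Hs].
  { intros n. destruct (Hsq n) as [[[_ Hs0] Hle] _]. lra. }
  apply cluster_point_ValAdh in Hs.
  destruct (cluster_point_in (fun x => inSp disc x /\ x <= tau) sq s) as [HsS Hstau].
  { apply approx_closed_and; [apply approx_closed_inSp|apply approx_closed_le]. }
  { intros n. apply Hsq. }
  { exact Hs. }
  destruct (Hloc s HsS Hstau) as [dl [Hdl HQ]].
  destruct (archimed_cor1 dl Hdl) as [N [HN HN0]].
  destruct (Hs dl Hdl N) as [p [Hp Hps]].
  destruct (Hsq p) as [[Hp1 Hp2] HnQ]. apply HnQ.
  apply Hmono with dl; [|exact (HQ _ Hp1 Hp2 Hps)].
  split; [apply Rinv_0_lt_compat, lt_0_INR; lia|].
  apply Rlt_le, Rle_lt_trans with (/ INR N); [|exact HN].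
  apply Rinv_le_contravar; [apply lt_0_INR; lia|apply le_INR; lia].
Qed.

Lemma inW_interval (a b : option R) (x y z : R) :
  inW a b x -> inW a b z -> x <= y <= z -> inW a b y.
Proof. unfold inW. destruct a, b; intros [? ?] [? ?] ?; split; auto; lra. Qed.

Section PoincareMap.

Variables (disc : bool) (Y : Type) (d : Y -> Y -> R) (a b : option R)
  (sigma : R -> Y -> Y) (phi : R -> R -> Y -> R) (tau : R) (q : Y).
Hypothesis Hmetric : is_metric d.
Hypothesis Hdyn : is_dyn_system disc d sigma.
Hypothesis Hcoc : is_monotone_cocycle disc d a b sigma phi.
Hypothesis Htau : inSp disc tau.
Hypothesis Htau_pos : 0 < tau.
Hypothesis Hq : sigma tau q = q.
Hypothesis Hstable : forall u, inW a b u -> periodic_point sigma phi tau (u, q) ->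
  pos_asympt_stable disc a b phi u q.

Definition poincare (u : R) : R := phi tau u q.

Lemma d_refl (y : Y) : d y y = 0.
Proof. apply (proj1 (proj2 Hmetric)). reflexivity. Qed.

Lemma d_nonneg (x y : Y) : 0 <= d x y.
Proof. apply (proj1 Hmetric). Qed.

Lemma phi_in_W (t u : R) (y : Y) : inSp disc t -> inW a b u -> inW a b (phi t u y).
Proof. apply (proj1 Hcoc). Qed.

Lemma phi_cocycle (t s u : R) (y : Y) : inSp disc t -> inSp disc s -> inW a b u ->
  phi (t + s) u y = phi t (phi s u y) (sigma s y).
Proof. apply (proj1 (proj2 (proj2 Hcoc))). Qed.

Lemma phi_continuous (t u : R) (y : Y) : inSp disc t -> inW a b u ->
  forall e, 0 < e -> exists dl, 0 < dl /\ forall t' u' y', inSp disc t' -> inW a b u' ->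
    Rabs (t' - t) < dl -> Rabs (u' - u) < dl -> d y' y < dl ->
    Rabs (phi t' u' y' - phi t u y) < e.
Proof. apply (proj1 (proj2 (proj2 (proj2 Hcoc)))). Qed.

Lemma sigma_mult_tau_q (k : nat) : sigma (INR k * tau) q = q.
Proof.
  destruct Hdyn as [S0 [Sgrp _]].
  induction k as [|k IH]; [rewrite Rmult_0_l; apply S0|].
  rewrite S_INR. replace ((INR k + 1) * tau) with (tau + INR k * tau) by ring.
  rewrite Sgrp, IH; [exact Hq|exact (proj1 Htau)|exact (proj1 (inSp_INR_mult disc tau k Htau))].
Qed.

Lemma phi_mult_tau_S (k : nat) (u : R) (y : Y) : inW a b u ->
  phi (INR (S k) * tau) u y = phi tau (phi (INR k * tau) u y) (sigma (INR k * tau) y).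
Proof.
  intros Hu. rewrite S_INR. replace ((INR k + 1) * tau) with (tau + INR k * tau) by ring.
  apply phi_cocycle; auto. apply inSp_INR_mult, Htau.
Qed.

Lemma phi_mult_tau_q (k : nat) (u : R) : inW a b u ->
  phi (INR k * tau) u q = Nat.iter k poincare u.
Proof.
  intros Hu. induction k as [|k IH].
  - rewrite Rmult_0_l. apply (proj1 (proj2 Hcoc)), Hu.
  - rewrite phi_mult_tau_S, sigma_mult_tau_q, IH by exact Hu. reflexivity.
Qed.

Lemma iter_poincare_fixed (k : nat) (v : R) : poincare v = v -> Nat.iter k poincare v = v.
Proof.
  intros Hv. apply (Nat.iter_invariant k _ poincare (fun x => x = v)); [|reflexivity].
  intros x ->. exact Hv.
Qed.

Lemma poincare_in_W (u : R) : inW a b u -> inW a b (poincare u).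
Proof. apply phi_in_W, Htau. Qed.

Lemma poincare_mono (u v : R) : inW a b u -> inW a b v -> u <= v -> poincare u <= poincare v.
Proof. apply (proj2 (proj2 (proj2 (proj2 Hcoc)))), Htau. Qed.

Lemma poincare_continuous (c : R) : inW a b c -> forall e, 0 < e -> exists dl, 0 < dl /\
  forall w, inW a b w -> Rabs (w - c) < dl -> Rabs (poincare w - poincare c) < e.
Proof.
  intros Hc e He. destruct (phi_continuous tau c q Htau Hc e He) as [dl [Hdl Hd]].
  exists dl. split; [exact Hdl|]. intros w Hw Hwc.
  apply Hd; auto; [rewrite Rminus_diag, Rabs_R0|rewrite d_refl]; exact Hdl.
Qed.

Lemma poincare_fixed_periodic (v : R) : poincare v = v -> periodic_point sigma phi tau (v, q).
Proof. intros Hv. unfold periodic_point, skew. simpl. fold (poincare v). now rewrite Hv, Hq. Qed.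

Lemma poincare_fixed_attracting (v : R) : inW a b v -> poincare v = v ->
  exists g, 0 < g /\ forall w, inW a b w -> Rabs (w - v) < g ->
    Un_cv (fun k => Nat.iter k poincare w) v.
Proof.
  intros Hv Hfix.
  destruct (Hstable v Hv (poincare_fixed_periodic v Hfix)) as [_ [g [Hg Hatt]]].
  exists g. split; [exact Hg|]. intros w Hw Hwv e He.
  destruct (tends_to_0_Sp_mult disc tau _ Htau Htau_pos (Hatt w Hw Hwv) e He) as [N HN].
  exists N. intros k Hk. specialize (HN k Hk). unfold Rdist in *.
  rewrite Rminus_0_r, (phi_mult_tau_q k w Hw), (phi_mult_tau_q k v Hv),
    (iter_poincare_fixed k v Hfix) in HN.
  exact HN.
Qed.

(* Attraction forces the graph of [poincare] to cross the diagonal downwards at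
   every fixed point, so two fixed points would enclose an upward crossing. *)
Lemma poincare_fixed_unique (v w : R) : inW a b v -> inW a b w ->
  poincare v = v -> poincare w = w -> v = w.
Proof.
  apply (fixed_point_unique_of_crossing (inW a b) poincare (inW_interval a b)
           poincare_continuous).
  - intros c Hc Hfix. destruct (poincare_fixed_attracting c Hc Hfix) as [g [Hg Hatt]].
    exists g. split; [exact Hg|]. intros x Hx Hcx.
    apply (attracted_right_below (inW a b) poincare poincare_in_W poincare_mono c x Hx);
      [lra|apply Hatt; [exact Hx|rewrite Rabs_right; lra]].
  - intros c Hc Hfix. destruct (poincare_fixed_attracting c Hc Hfix) as [g [Hg Hatt]].
    exists g. split; [exact Hg|]. intros x Hx Hcx.
    apply (attracted_left_above (inW a b) poincare poincare_in_W poincare_mono c x Hx);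
      [lra|apply Hatt; [exact Hx|rewrite Rabs_left; lra]].
Qed.

Variables (u0 : R) (y0 : Y).
Hypothesis Hu0 : inW a b u0.
Hypothesis Hlagrange : pos_Lagrange_stable disc d a b sigma phi (u0, y0).
Hypothesis Hy0 : tends_to_0_Sp disc (fun t => d (sigma t y0) (sigma t q)).

Local Notation sample k := (phi (INR k * tau) u0 y0).
Local Notation base k := (sigma (INR k * tau) y0).

Lemma base_samples_near_q (e : R) : 0 < e ->
  exists N, forall k, (N <= k)%nat -> d (base k) q < e.
Proof.
  intros He. destruct (tends_to_0_Sp_mult disc tau _ Htau Htau_pos Hy0 e He) as [N HN].
  exists N. intros k Hk. specialize (HN k Hk). unfold Rdist in HN.
  rewrite Rminus_0_r, sigma_mult_tau_q in HN.
  eapply Rle_lt_trans; [apply Rle_abs|exact HN].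
Qed.

Lemma samples_subseq_cvg : subseq_cvg_in (inW a b) (fun k => sample k).
Proof.
  intros s.
  destruct (Hlagrange (fun n => skew sigma phi (INR (s n) * tau) (u0, y0)))
    as [g [l [Hg [Hl Hcv]]]].
  { intros n. exists (INR (s n) * tau). split; [apply inSp_INR_mult, Htau|reflexivity]. }
  exists g, (fst l). split; [exact (increasing_nat_ge_id g Hg)|split; [exact Hl|]].
  intros e He. destruct (Hcv e He) as [N HN]. exists N. intros n Hn.
  specialize (HN n Hn). unfold rhoX, skew in HN. simpl in HN. unfold Rdist.
  generalize (d_nonneg (sigma (INR (s (g n)) * tau) y0) (snd l)). lra.
Qed.

Lemma samples_step (s : nat -> nat) (l : R) : (forall n, (n <= s n)%nat) -> inW a b l ->
  Un_cv (fun n => sample (s n)) l -> Un_cv (fun n => sample (S (s n))) (poincare l).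
Proof.
  intros Hs Hl Hsl e He.
  destruct (phi_continuous tau l q Htau Hl e He) as [dl [Hdl Hd]].
  destruct (Hsl dl Hdl) as [N1 HN1]. destruct (base_samples_near_q dl Hdl) as [N2 HN2].
  exists (max N1 N2). intros n Hn. unfold Rdist. rewrite phi_mult_tau_S by exact Hu0.
  apply Hd.
  - exact Htau.
  - apply phi_in_W; [apply inSp_INR_mult, Htau|exact Hu0].
  - rewrite Rminus_diag, Rabs_R0. exact Hdl.
  - apply HN1. lia.
  - apply HN2. specialize (Hs n). lia.
Qed.

Lemma samples_cvg : exists M, inW a b M /\ poincare M = M /\ Un_cv (fun k => sample k) M.
Proof.
  apply monotone_asymptotic_iteration_cvg.
  - exact poincare_mono.
  - exact poincare_fixed_unique.
  - exact samples_subseq_cvg.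
  - exact samples_step.
Qed.

(* Between sampling times the orbit is [phi s (sample k) (base k)] with
   [s in [0, tau)]; continuity of [phi] is uniform in [s] by compactness. *)
Lemma orbit_tracks_periodic (M : R) : inW a b M -> poincare M = M ->
  Un_cv (fun k => sample k) M -> tends_to_0_Sp disc (fun t => phi t u0 y0 - phi t M q).
Proof.
  intros HM Hfix Hcv e He.
  destruct (uniform_radius_on_period disc tau (fun dl s => forall u y, inW a b u ->
      Rabs (u - M) < dl -> d y q < dl -> Rabs (phi s u y - phi s M q) < e))
    as [dl [Hdl Hunif]].
  - intros dl dl' s Hdl' HQ u y Hu Hum Hyq. apply HQ; auto; lra.
  - intros s Hs Hst. destruct (phi_continuous s M q Hs HM (e / 2) ltac:(lra)) as [dl [Hdl Hd]].
    exists dl. split; [exact Hdl|]. intros s' Hs' _ Hss' u y Hu Hum Hyq.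
    assert (Hfar := Hd s' u y Hs' Hu Hss' Hum Hyq).
    assert (Hnear : Rabs (phi s' M q - phi s M q) < e / 2).
    { apply Hd; auto; [rewrite Rminus_diag, Rabs_R0|rewrite d_refl]; exact Hdl. }
    replace (phi s' u y - phi s' M q)
      with ((phi s' u y - phi s M q) - (phi s' M q - phi s M q)) by ring.
    eapply Rle_lt_trans; [apply Rabs_triang|]. rewrite Rabs_Ropp. lra.
  - destruct (Hcv dl Hdl) as [N1 HN1]. destruct (base_samples_near_q dl Hdl) as [N2 HN2].
    exists (INR (max N1 N2) * tau + tau). intros t Ht HT.
    destruct (inSp_euclid disc tau t Htau Htau_pos Ht) as [k [s [Hs [Hst ->]]]].
    assert (Hk : (max N1 N2 < k)%nat).
    { apply INR_lt, (Rmult_lt_reg_r tau); [exact Htau_pos|lra]. }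
    assert (Hk_tau := inSp_INR_mult disc tau k Htau).
    rewrite !phi_cocycle by assumption.
    rewrite phi_mult_tau_q, iter_poincare_fixed, sigma_mult_tau_q by assumption.
    apply Hunif; [exact Hs|lra|apply phi_in_W; assumption| |apply HN2; lia].
    apply HN1. lia.
Qed.

End PoincareMap.

Theorem mainTheorem11
  (disc : bool) (Y : Type) (d : Y -> Y -> R)
  (a b : option R) (sigma : R -> Y -> Y) (phi : R -> R -> Y -> R)
  (tau : R) (x0 : R * Y) (q : Y)
  (Hmetric : is_metric d) (Hcomplete : is_complete d)
  (Hdyn : is_dyn_system disc d sigma)
  (Hcoc : is_monotone_cocycle disc d a b sigma phi)
  (Htau : inSp disc tau) (Htau_pos : 0 < tau)
  (Hx0 : inW a b (fst x0))
  (H1 : forall (k : nat) (u1 u2 : R) (y : Y), inW a b u1 -> inW a b u2 -> u1 < u2 ->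
          phi (INR k * tau) u1 y < phi (INR k * tau) u2 y)
  (H2 : pos_Lagrange_stable disc d a b sigma phi x0)
  (H3 : asympt_periodic_Y_with disc d sigma tau (snd x0) q)
  (H4 : forall u : R, inW a b u -> periodic_point sigma phi tau (u, q) ->
          pos_asympt_stable disc a b phi u q) :
  asympt_periodic_X disc d a b sigma phi tau x0.
Proof.
  destruct x0 as [u0 y0]. destruct H3 as [Hq Hy0]. simpl in Hx0, Hy0.
  destruct (samples_cvg disc Y d a b sigma phi tau q Hmetric Hdyn Hcoc Htau Htau_pos Hq H4
              u0 y0 Hx0 H2 Hy0) as [M [HM [Hfix Hcv]]].
  exists (M, q). split; [exact HM|split; [exact (poincare_fixed_periodic _ _ _ _ _ Hq M Hfix)|]].
  unfold rhoX, skew. simpl.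
  apply tends_to_0_Sp_plus; [|exact Hy0].
  intros e He.
  destruct (orbit_tracks_periodic disc Y d a b sigma phi tau q Hmetric Hdyn Hcoc Htau Htau_pos
              Hq u0 y0 Hx0 Hy0 M HM Hfix Hcv e He) as [T HT].
  exists T. intros t Ht HtT. rewrite Rabs_Rabsolu. exact (HT t Ht HtT).
Qed.
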